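(* Let $q$ be a prime power, $m\ge 2$ an integer, $n=q^m-1$, and $\delta$ an integer with $2\le\delta\le n$. The primitive, narrow-sense BCH code $\mathcal{BCH}(n,q;\delta)$ over $\mathbf{F}_q$ contains its Euclidean dual code if and only if $$\delta\le \delta_{\max}=q^{\lceil m/2\rceil}-1-(q-2)[m\text{ odd}].$$
   Context: Let $\alpha$ be a primitive element of $\mathbf{F}_{q^m}$ and $n=q^m-1$. For an integer $x$, the $q$-ary cyclotomic coset of $x$ modulo $n$ is $C_x=\{xq^k \bmod n \mid 0\le k<m\}$. For $2\le\delta\le n$, the primitive, narrow-sense BCH code $\mathcal{BCH}(n,q;\delta)$ of designed distance $\delta$ is the cyclic code of length $n$ over $\mathbf{F}_q$ with generator polynomial $g(x)=\prod_{z\in Z}(x-\alpha^z)$, where $Z=C_1\cup\cdots\cup C_{\delta-1}$ is its defining set. The Euclidean dual of $C\subseteq\mathbf{F}_q^n$ is $C^\perp=\{y\in\mathbf{F}_q^n\mid x\cdot y=0\ \forall x\in C\}$. Iverson notation: $[P]=1$ if $P$ holds and $0$ otherwise. *)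

From HB Require Import structures.
From mathcomp Require Import all_boot all_order all_algebra all_field.
Set Implicit Arguments. Unset Strict Implicit. Unset Printing Implicit Defensive.
Import GRing.Theory.
Local Open Scope ring_scope.

Definition in_cyclotomic_coset (q m n x z : nat) : bool :=
  [exists k : 'I_m, z == (x * q ^ k) %% n]%N.

Definition in_BCH_defining_set (q m n delta z : nat) : bool :=
  [exists x : 'I_delta, (1 <= x)%N && in_cyclotomic_coset q m n x z].

Definition BCH_genpoly (F : fieldType) (L : fieldExtType F) (q m n delta : nat)
  (alpha : L) : {poly L} :=
  \prod_(z < n | in_BCH_defining_set q m n delta z) ('X - (alpha ^+ z)%:P).

Definition word_poly (F : fieldType) (n : nat) (c : 'rV[F]_n) : {poly F} :=
  \sum_(i < n) c ord0 i *: 'X^i.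

Definition BCH_code (F : fieldType) (L : fieldExtType F) (q m delta : nat)
  (alpha : L) (c : 'rV[F]_(q ^ m - 1)) : Prop :=
  BCH_genpoly q m (q ^ m - 1) delta alpha %| map_poly (in_alg L) (word_poly c).

Definition edot (F : fieldType) (n : nat) (x y : 'rV[F]_n) : F :=
  \sum_(i < n) x ord0 i * y ord0 i.

Definition euclidean_dual (F : fieldType) (n : nat) (C : 'rV[F]_n -> Prop)
  (y : 'rV[F]_n) : Prop :=
  forall x, C x -> edot x y = 0.

Definition delta_max (q m : nat) : nat :=
  (q ^ uphalf m - 1 - (q - 2) * odd m)%N.

Arguments BCH_code {F L} q m delta alpha c.
Arguments BCH_genpoly {F L} q m n delta alpha.

From HB Require Import structures.
From mathcomp Require Import all_boot all_order all_algebra all_field.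
From mathcomp Require Import zify.
Set Implicit Arguments. Unset Strict Implicit. Unset Printing Implicit Defensive.
Import GRing.Theory.
Local Open Scope ring_scope.

(* Write n = q^m - 1 and Z = C_1 u ... u C_(delta-1) for the defining set.  For b
   with b^(q^m) = b, the word t_i = Tr(b alpha^(z i)) pairs with any word y as
   <y, t> = Tr(b y(alpha^z)), and its polynomial takes at alpha^w the value
   sum_k b^(q^k) [n | z q^k + w] n.  A nonzero q-linearized polynomial of degree
   at most q^(m-1) cannot vanish on all of F_(q^m), so suitable choices of b show
   that BCH^perp is contained in BCH exactly when n never divides x q^j + x' for
   1 <= x, x' < delta, i.e. when Z and -Z are disjoint.
   That condition holds iff delta <= delta_max: x q^j mod n is the cyclic rotation
   of the m base-q digits of x, which for x < delta_max stays at most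
   n - delta_max, while x q^(m/2) + x' = n for an explicit pair x, x' <= delta_max. *)

Lemma mul_expn_divn_eq (q m j x : nat) : (0 < q)%N -> (j <= m)%N ->
  (x * q ^ j = x %/ q ^ (m - j) * (q ^ m - 1)
               + (x %/ q ^ (m - j) + x %% q ^ (m - j) * q ^ j))%N.
Proof.
move=> q_gt0 le_jm; set s := (m - j)%N.
have qm : (q ^ m = q ^ s * q ^ j)%N by rewrite -expnD subnK.
have : (0 < q ^ m)%N by rewrite expn_gt0 q_gt0.
rewrite {1}(divn_eq x (q ^ s)) qm; nia.
Qed.

Lemma delta_max_even (q t : nat) : delta_max q (t + t) = (q ^ t - 1)%N.
Proof. by rewrite /delta_max addnn odd_double uphalf_double muln0 subn0. Qed.

Lemma delta_max_odd (q t : nat) : (1 < q)%N ->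
  delta_max q (t + t).+1 = (q ^ t.+1 - q + 1)%N.
Proof.
move=> q_gt1; rewrite /delta_max addnn /= odd_double doubleK muln1.
have : (q ^ 1 <= q ^ t.+1)%N by rewrite leq_pexp2l //; lia.
rewrite expn1; lia.
Qed.

(* With m = t + t (resp. (t + t).+1 below), [u] and [v] stand for x / q^(m-j) and
   x mod q^(m-j), so that [u + v q^j] is the rotation of x, by [mul_expn_divn_eq]. *)
Lemma shift_bound_even (q t j u v : nat) : (1 < q)%N -> (j < t + t)%N ->
  (v < q ^ (t + t - j))%N -> (u * q ^ (t + t - j) + v < q ^ t - 1)%N ->
  (u + v * q ^ j + (q ^ t - 1) <= q ^ (t + t) - 1)%N.
Proof.
move=> q_gt1 lt_j2t; set s := (t + t - j)%N => lt_v lt_x.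
have q_gt0 : (0 < q)%N by lia.
have qs_gt0 : (0 < q ^ s)%N by rewrite expn_gt0 q_gt0.
have qt_gt1 : (1 < q ^ t)%N by rewrite -(expn0 q) ltn_exp2l //; lia.
rewrite expnD; case: (leqP j t) => [le_jt | lt_tj].
- have le_ts : (q ^ t <= q ^ s)%N by rewrite leq_pexp2l //; lia.
  have le_jt' : (q ^ j <= q ^ t)%N by rewrite leq_pexp2l.
  have u0 : u = 0%N by nia.
  by rewrite u0 in lt_x *; nia.
- pose C := (q ^ (j - t))%N.
  have qsC : (q ^ s * C = q ^ t)%N by rewrite -expnD; congr (expn q _); lia.
  have qjC : (q ^ j = q ^ t * C)%N by rewrite -expnD; congr (expn q _); lia.
  have lt_uC : (u < C)%N by rewrite -(ltn_pmul2l qs_gt0) qsC; lia.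
  by rewrite qjC; nia.
Qed.

Lemma shift_bound_odd (q t j u v : nat) : (1 < q)%N -> (0 < t)%N ->
  (j < (t + t).+1)%N -> (v < q ^ ((t + t).+1 - j))%N ->
  (u * q ^ ((t + t).+1 - j) + v < q ^ t.+1 - q + 1)%N ->
  (u + v * q ^ j + (q ^ t.+1 - q + 1) <= q ^ (t + t).+1 - 1)%N.
Proof.
move=> q_gt1 t_gt0 lt_jm; set s := ((t + t).+1 - j)%N => lt_v lt_x.
have q_gt0 : (0 < q)%N by lia.
have qs_gt0 : (0 < q ^ s)%N by rewrite expn_gt0 q_gt0.
have le_qqt : (q <= q ^ t)%N by rewrite -{1}(expn1 q) leq_pexp2l.
rewrite !expnS expnD in lt_x *.
case: (ltngtP j t.+1) => [lt_jt | lt_tj | eq_jt].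
- have le_ts : (q * q ^ t <= q ^ s)%N by rewrite -expnS leq_pexp2l //; lia.
  have le_jt : (q ^ j <= q ^ t)%N by rewrite leq_pexp2l.
  have u0 : u = 0%N by nia.
  by rewrite u0 in lt_x *; nia.
- pose C := (q ^ (j - t))%N.
  have qsC : (q ^ s * C = q * q ^ t)%N by rewrite -expnD -expnS; congr (expn q _); lia.
  have qjC : (q ^ j = q ^ t * C)%N by rewrite -expnD; congr (expn q _); lia.
  have le_qqC : (q * q <= C)%N by rewrite mulnn leq_pexp2l //; lia.
  have lt_uC : (u < C)%N by rewrite -(ltn_pmul2l qs_gt0) qsC; lia.
  by rewrite qjC; nia.
- have st : s = t by rewrite /s; lia.
  rewrite st in lt_v lt_x; rewrite eq_jt expnS.
  have lt_uq : (u < q)%N by rewrite -(ltn_pmul2r (leq_trans q_gt0 le_qqt)); lia.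
  case: (ltngtP u q.-1) => [lt_uq1 | | eq_uq1]; [nia | lia | ].
  by rewrite eq_uq1 in lt_x *; nia.
Qed.

Lemma delta_max_not_dvdn (q m j x x' : nat) : (1 < q)%N -> (1 < m)%N ->
  (j < m)%N -> (x < delta_max q m)%N -> (0 < x' < delta_max q m)%N ->
  ~~ (q ^ m - 1 %| x * q ^ j + x')%N.
Proof.
move=> q_gt1 m_gt1 lt_jm lt_x /andP[x'_gt0 lt_x'].
have q_gt0 : (0 < q)%N by lia.
have bound u v : (v < q ^ (m - j))%N -> (u * q ^ (m - j) + v < delta_max q m)%N ->
    (u + v * q ^ j + delta_max q m <= q ^ m - 1)%N.
  move: lt_jm m_gt1; rewrite -(odd_double_half m) -addnn.
  case: (odd m) => /=; rewrite ?add1n ?add0n => lt_jm m_gt1.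
  - rewrite delta_max_odd // => lt_v lt_uv.
    apply: shift_bound_odd => //; lia.
  - by rewrite delta_max_even; apply: shift_bound_even.
have qs_gt0 : (0 < q ^ (m - j))%N by rewrite expn_gt0 q_gt0.
have := bound (x %/ q ^ (m - j))%N _ (ltn_pmod x qs_gt0).
rewrite -divn_eq => /(_ lt_x) le_r.
rewrite (mul_expn_divn_eq x q_gt0 (ltnW lt_jm)) -addnA dvdn_addr ?dvdn_mull //.
set r := (x %/ q ^ (m - j) + _)%N in le_r *; clearbody r.
apply/negP => /dvdn_leq; lia.
Qed.

Lemma delta_max_dvdn_witness (q m : nat) : (1 < q)%N -> (1 < m)%N ->
  exists x x' j, [/\ (0 < x <= delta_max q m)%N, (0 < x' <= delta_max q m)%N,
                    (j < m)%N & (x * q ^ j + x' = q ^ m - 1)%N].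
Proof.
move=> q_gt1; rewrite -(odd_double_half m) -addnn.
case: (odd m) => /=; rewrite ?add1n ?add0n => m_gt1.
- rewrite delta_max_odd //.
  have le_qqt : (q <= q ^ m./2)%N by rewrite -{1}(expn1 q) leq_pexp2l //; lia.
  exists (q ^ m./2.+1 - q + 1)%N, (q ^ m./2.+1 - q ^ m./2 - 1)%N, m./2.
  move: le_qqt; rewrite !expnS expnD; move: (q ^ m./2)%N => Q le_qQ.
  split; nia.
- rewrite delta_max_even.
  have qt_gt1 : (1 < q ^ m./2)%N by rewrite -(expn0 q) ltn_exp2l //; lia.
  exists (q ^ m./2 - 1)%N, (q ^ m./2 - 1)%N, m./2.
  rewrite expnD; move: qt_gt1; move: (q ^ m./2)%N => Q Q_gt1.
  split; nia.
Qed.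

(* n does not divide x q^j + x' iff -x' mod n is not in C_x: the defining set Z
   of BCH(n,q;delta) is disjoint from -Z. *)
Definition neg_coset_free (q m delta : nat) : Prop :=
  forall x x' j, (0 < x < delta)%N -> (0 < x' < delta)%N -> (j < m)%N ->
    ~~ (q ^ m - 1 %| x * q ^ j + x')%N.

Lemma neg_coset_free_iff (q m delta : nat) : (1 < q)%N -> (1 < m)%N ->
  neg_coset_free q m delta <-> (delta <= delta_max q m)%N.
Proof.
move=> q_gt1 m_gt1; split => [free | le_dD x x' j /andP[_ lt_x] lt_x' lt_jm].
- rewrite leqNgt; apply/negP => lt_Dd.
  have [x [x' [j [x_range x'_range lt_jm xE]]]] :=
    delta_max_dvdn_witness q_gt1 m_gt1.
  have /negP[] : ~~ (q ^ m - 1 %| x * q ^ j + x')%N by apply: free => //; lia.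
  by rewrite xE.
- by apply: delta_max_not_dvdn => //; lia.
Qed.

Lemma sum_prim_root_expr (R : idomainType) (n : nat) (z : R) (e : nat) :
  n.-primitive_root z ->
  \sum_(i < n) (z ^+ e) ^+ i = if (n %| e)%N then n%:R else 0.
Proof.
move=> prim; case: ifPn => [/dvdnP[c ->] | ndvd].
  under eq_bigr => i _ do rewrite mulnC exprM (prim_expr_order prim) !expr1n.
  by rewrite sumr_const card_ord.
have : (z ^+ e - 1) * \sum_(i < n) (z ^+ e) ^+ i = 0.
  by rewrite -subrX1 exprAC (prim_expr_order prim) expr1n subrr.
by move/eqP; rewrite mulf_eq0 subr_eq0 -(prim_order_dvd prim) (negbTE ndvd) => /eqP.
Qed.

Lemma edotC (K : fieldType) (n : nat) (x y : 'rV[K]_n) : edot x y = edot y x.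
Proof. by apply: eq_bigr => i _; rewrite mulrC. Qed.

Section FiniteFieldExtension.

Variables (F : finFieldType) (L : fieldExtType F).
Local Notation q := #|F|.

Lemma pchar_nat_card : [pchar L].-nat q.
Proof.
have [p p_pr pF] := finPcharP F.
by rewrite (card_pprimeChar pF) pnatX (pnatE _ p_pr) pchar_lalg pF.
Qed.

Lemma exprD_card_pow k (a b : L) :
  (a + b) ^+ (q ^ k) = a ^+ (q ^ k) + b ^+ (q ^ k).
Proof. by apply: exprDn_pchar; rewrite pnatX pchar_nat_card. Qed.

Lemma expr0_card_pow k : (0 : L) ^+ (q ^ k) = 0.
Proof. by rewrite expr0n expn_eq0; case: q (card_finNzRing_gt1 F). Qed.

Lemma expr_sum_card_pow k (I : Type) (r : seq I) (P : pred I) (f : I -> L) :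
  (\sum_(i <- r | P i) f i) ^+ (q ^ k) = \sum_(i <- r | P i) f i ^+ (q ^ k).
Proof.
apply: (big_morph (fun x => x ^+ (q ^ k))); first exact: exprD_card_pow.
exact: expr0_card_pow.
Qed.

Lemma in_alg_expr_card_pow k (a : F) : in_alg L a ^+ (q ^ k) = in_alg L a.
Proof.
elim: k => [|k IHk]; first by rewrite expr1.
by rewrite expnSr exprM IHk -rmorphXn /= expf_card.
Qed.

Lemma expr_card_pow_mod (b : L) m e : b ^+ (q ^ m) = b ->
  b ^+ (q ^ e) = b ^+ (q ^ (e %% m)).
Proof.
move=> bE; rewrite {1}(divn_eq e m) expnD (mulnC (e %/ m)%N) expnM exprM.
by congr (_ ^+ _); elim: (e %/ m)%N => [|d IHd]; rewrite ?expr1 // expnS exprM bE.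
Qed.

Lemma mem1v_expr_card (t : L) : (t \in 1%VS) = (t ^+ q == t).
Proof. by rewrite (@Fermat's_little_theorem _ L 1%AS) dimv1 expn1. Qed.

(* The preimage under [in_alg L]; the junk value 0 outside F is never used. *)
Definition base_of (t : L) : F := odflt 0 [pick a : F | in_alg L a == t].

Lemma base_ofK (t : L) : t \in 1%VS -> in_alg L (base_of t) = t.
Proof.
move=> /vlineP[a ->]; rewrite /base_of; case: pickP => [b /eqP // | /(_ a)].
by rewrite in_algE eqxx.
Qed.

(* The trace of F_(q^m) over F_q, on elements with x^(q^m) = x. *)
Definition qtrace (m : nat) (x : L) : L := \sum_(k < m) x ^+ (q ^ k).

Lemma mem1v_qtrace m x : x ^+ (q ^ m) = x -> qtrace m x \in 1%VS.
Proof.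
case: m => [_ | m xE]; first by rewrite /qtrace big_ord0 mem0v.
rewrite mem1v_expr_card -{1}(expn1 q) /qtrace expr_sum_card_pow.
rewrite big_ord_recr big_ord_recl /= -exprM -expnSr xE expn0 expr1 addrC.
by apply/eqP; congr (_ + _); apply: eq_bigr => i _; rewrite -exprM -expnSr.
Qed.

Definition linearized_poly m (a : 'I_m -> L) : {poly L} :=
  \sum_(k < m) a k *: 'X^(q ^ k).

Lemma linearized_poly_eq0 m (a : 'I_m -> L) :
  (linearized_poly a == 0) = [forall k, a k == 0].
Proof.
apply/eqP/forallP => [a0 j | a0]; last first.
  by rewrite /linearized_poly big1 // => k _; rewrite (eqP (a0 k)) scale0r.
have /(congr1 (fun p : {poly L} => p`_(q ^ j))) := a0.
rewrite coef0 coef_sum (bigD1 j) //= coefZ coefXn eqxx mulr1 big1 ?addr0 => [->//|k kj].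
rewrite coefZ coefXn eqn_exp2l ?card_finNzRing_gt1 // eq_sym.
by rewrite (negbTE kj : (k == j :> nat) = false) mulr0.
Qed.

Lemma size_linearized_poly m (a : 'I_m -> L) :
  (size (linearized_poly a) <= (q ^ m.-1).+1)%N.
Proof.
apply: (leq_trans (size_sum _ _ _)); apply/bigmax_leqP => k _.
apply: (leq_trans (size_scale_leq _ _)); rewrite size_polyXn ltnS leq_pexp2l //.
  exact: ltnW (card_finNzRing_gt1 F).
by have := ltn_ord k; case: m a k.
Qed.

Section PrimitiveRoot.

Variables (m : nat) (alpha : L).
Hypothesis prim : (q ^ m - 1).-primitive_root alpha.
Local Notation n := (q ^ m - 1)%N.

Lemma card_pow_gt1 : (1 < q ^ m)%N.
Proof. by rewrite -subn_gt0 (prim_order_gt0 prim). Qed.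

Lemma degree_gt0 : (0 < m)%N.
Proof. by have := prim_order_gt0 prim; case: m => //; rewrite expn0. Qed.

Lemma prim_root_expr_card_pow (t : nat) : (alpha ^+ t) ^+ (q ^ m) = alpha ^+ t.
Proof.
have -> : (q ^ m = n.+1)%N by have := card_pow_gt1; lia.
by rewrite exprAC exprS (prim_expr_order prim) mulr1.
Qed.

Lemma prim_root_expr_inj (i j : 'I_n) : alpha ^+ i = alpha ^+ j -> i = j.
Proof.
by move/eqP; rewrite (eq_prim_root_expr prim) !modn_small // => /eqP/val_inj.
Qed.

Lemma linearized_sum_neq0 (a : 'I_m -> L) (j : 'I_m) : a j != 0 ->
  exists2 b : L, b ^+ (q ^ m) = b & \sum_(k < m) a k * b ^+ (q ^ k) != 0.
Proof.
move=> aj_neq0.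
pose P := linearized_poly a; pose rs := 0 :: [seq alpha ^+ i | i <- iota 0 n].
have P_neq0 : P != 0 by rewrite linearized_poly_eq0; apply/forallP => /(_ j); apply/negP.
have rs_uniq : uniq rs.
  rewrite /= map_inj_in_uniq ?iota_uniq ?andbT.
    apply/mapP => -[i _ /eqP]; rewrite eq_sym expf_eq0 (prim_root_eq0 prim).
    by rewrite (gtn_eqF (prim_order_gt0 prim)) andbF.
  move=> i k; rewrite !mem_iota /= !add0n => lt_in lt_kn /eqP.
  by rewrite (eq_prim_root_expr prim) !modn_small // => /eqP.
case: (boolP (all (root P) rs)) => [all_root | /allPn[b rs_b nroot_b]].
  exfalso; have := max_poly_roots P_neq0 all_root rs_uniq.
  rewrite /= size_map size_iota; have := size_linearized_poly a.
  have : (2 * q ^ m.-1 <= q ^ m)%N.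
    have m_gt0 : (0 < m)%N := leq_ltn_trans (leq0n j) (ltn_ord j).
    by rewrite -{2}(prednK m_gt0) expnS leq_mul2r card_finNzRing_gt1 orbT.
  have := card_pow_gt1; rewrite -/P; move: (q ^ m)%N (q ^ m.-1)%N (size P) => X Y S; lia.
exists b; last first.
  move: nroot_b; rewrite /root /P /linearized_poly horner_sum.
  by under eq_bigr => k _ do rewrite hornerZ hornerXn.
move: rs_b; rewrite inE => /predU1P[-> | /mapP[i _ ->]].
  exact: expr0_card_pow.
by rewrite prim_root_expr_card_pow.
Qed.

Definition eval_word (c : 'rV[F]_n) (e : nat) : L :=
  (map_poly (in_alg L) (word_poly c)).[alpha ^+ e].

Lemma eval_wordE c e :
  eval_word c e = \sum_(i < n) in_alg L (c ord0 i) * alpha ^+ (e * i).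
Proof.
rewrite /eval_word /word_poly rmorph_sum horner_sum; apply: eq_bigr => i _ /=.
by rewrite map_polyZ map_polyXn hornerZ hornerXn exprM.
Qed.

Definition trace_word (b : L) (z : nat) : 'rV[F]_n :=
  \row_(i < n) base_of (qtrace m (b * alpha ^+ (z * i))).

Lemma trace_wordE b z i : b ^+ (q ^ m) = b ->
  in_alg L (trace_word b z ord0 i) = qtrace m (b * alpha ^+ (z * i)).
Proof.
move=> bE; rewrite mxE base_ofK // mem1v_qtrace //.
by rewrite exprMn bE prim_root_expr_card_pow.
Qed.

Lemma edot_trace_word c b z : b ^+ (q ^ m) = b ->
  in_alg L (edot c (trace_word b z)) = qtrace m (b * eval_word c z).
Proof.
move=> bE; rewrite /edot (big_morph (in_alg L) (rmorphD _) (rmorph0 _)).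
rewrite eval_wordE mulr_sumr.
(* Stated at [in_alg L] itself, so that [trace_wordE] can rewrite the result. *)
have in_algM (a a' : F) : in_alg L (a * a') = in_alg L a * in_alg L a'.
  exact: rmorphM.
under eq_bigr => i _ do rewrite in_algM trace_wordE // /qtrace mulr_sumr.
rewrite exchange_big /=; apply: eq_bigr => k _; rewrite expr_sum_card_pow.
by apply: eq_bigr => i _; rewrite !exprMn in_alg_expr_card_pow mulrCA.
Qed.

Lemma eval_trace_word b z w : b ^+ (q ^ m) = b ->
  eval_word (trace_word b z) w =
    \sum_(k < m) b ^+ (q ^ k) * (if (n %| z * q ^ k + w)%N then n%:R else 0).
Proof.
move=> bE; rewrite eval_wordE.
under eq_bigr => i _ do rewrite trace_wordE // /qtrace mulr_suml.
rewrite exchange_big /=; apply: eq_bigr => k _.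
rewrite -(sum_prim_root_expr _ prim) mulr_sumr; apply: eq_bigr => i _.
rewrite exprMn -mulrA -!exprM -exprD; congr (_ * alpha ^+ _).
by rewrite mulnDl mulnAC.
Qed.

Section BCH.

Variable delta : nat.
Local Notation Z := (in_BCH_defining_set q m n delta).
Local Notation BCH := (BCH_code q m delta alpha).

Lemma BCH_codeP c : BCH c <-> (forall z : 'I_n, Z z -> eval_word c z = 0).
Proof.
rewrite /BCH_code /BCH_genpoly; split.
  move=> /dvdpP[r rE] z Zz; rewrite /eval_word rE hornerM horner_prod (bigD1 z) //=.
  by rewrite hornerXsubC subrr mul0r mulr0.
move=> c_Z; rewrite -big_filter.
rewrite -(big_map (fun z : 'I_n => alpha ^+ z) xpredT (fun x => 'X - x%:P)).
apply: uniq_roots_dvdp.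
  apply/allP => r /mapP[z]; rewrite mem_filter => /andP[Zz _] ->.
  by rewrite /root -/(eval_word c z) c_Z.
rewrite uniq_rootsE map_inj_uniq ?filter_uniq ?index_enum_uniq //.
exact: prim_root_expr_inj.
Qed.

Lemma in_BCH_defining_setP (z : nat) :
  reflect (exists x k, [/\ (0 < x < delta)%N, (k < m)%N & z = (x * q ^ k %% n)%N])
          (Z z).
Proof.
apply: (iffP existsP) => [[x /andP[x_gt0 /existsP[k /eqP ->]]] | ].
  by exists x, k; rewrite x_gt0 ltn_ord.
move=> [x [k [/andP[x_gt0 lt_xd] lt_km ->]]].
by exists (Ordinal lt_xd); rewrite x_gt0; apply/existsP; exists (Ordinal lt_km).
Qed.

Lemma defining_set_neg_coset (z w k : nat) : Z z -> Z w -> (k < m)%N ->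
  (n %| z * q ^ k + w)%N ->
  exists x x' j, [/\ (0 < x < delta)%N, (0 < x' < delta)%N, (j < m)%N &
                   (n %| x * q ^ j + x')%N].
Proof.
move=> /in_BCH_defining_setP[x [a [x_range _ ->]]].
move=> /in_BCH_defining_setP[x' [b [x'_range lt_bm ->]]] lt_km.
rewrite (prim_order_dvd prim) exprD exprM !prim_expr_mod // -exprM.
(* Raising to q^(m-b) turns the second factor into alpha^x' and shifts the first. *)
move=> /eqP/(congr1 (fun u => u ^+ (q ^ (m - b)))).
rewrite expr1n exprMn -2!exprM -!mulnA -!expnD (subnKC (ltnW lt_bm)).
rewrite exprM [alpha ^+ (x' * _)%N]exprM.
rewrite prim_root_expr_card_pow (expr_card_pow_mod _ (prim_root_expr_card_pow x)).
move=> xE.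
exists x, x', ((a + (k + (m - b))) %% m)%N; split; rewrite ?ltn_mod ?degree_gt0 //.
by rewrite (prim_order_dvd prim) exprD exprM xE.
Qed.

Hypothesis le_delta_n : (delta <= n)%N.

Lemma in_BCH_defining_set_small (x : nat) : (0 < x < delta)%N -> Z x.
Proof.
move=> x_range; apply/in_BCH_defining_setP; exists x, 0%N.
rewrite expn0 muln1 modn_small ?degree_gt0 //.
by case/andP: x_range => _ /leq_trans->.
Qed.

Lemma dual_in_BCH_of_neg_coset_free : neg_coset_free q m delta ->
  forall y, euclidean_dual BCH y -> BCH y.
Proof.
move=> free y y_dual; apply/BCH_codeP => z Zz.
apply/eqP; apply: contraT => yz_neq0.
have [b bE tr_neq0] : exists2 b : L, b ^+ (q ^ m) = b &
    \sum_(k < m) eval_word y z ^+ (q ^ k) * b ^+ (q ^ k) != 0.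
  apply: (@linearized_sum_neq0 (fun k => eval_word y z ^+ (q ^ k))
    (Ordinal degree_gt0)).
  by rewrite /= expn0 expr1.
have tw_BCH : BCH (trace_word b z).
  apply/BCH_codeP => w Zw; rewrite eval_trace_word // big1 // => k _.
  case: ifP => [zw_dvd | _]; last by rewrite mulr0.
  have [x [x' [j [x_range x'_range lt_jm]]]] :=
    defining_set_neg_coset Zz Zw (ltn_ord k) zw_dvd.
  by move/negP: (free x x' j x_range x'_range lt_jm).
have tr_eq0 : \sum_(k < m) eval_word y z ^+ (q ^ k) * b ^+ (q ^ k) = 0.
  have := y_dual _ tw_BCH; rewrite edotC => /(congr1 (in_alg L)).
  rewrite edot_trace_word // rmorph0 /qtrace => tr0; rewrite -[RHS]tr0.
  by apply: eq_bigr => k _; rewrite exprMn mulrC.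
by rewrite tr_eq0 eqxx in tr_neq0.
Qed.

Lemma neg_coset_free_of_dual_in_BCH :
  (forall y, euclidean_dual BCH y -> BCH y) -> neg_coset_free q m delta.
Proof.
move=> dual_in x x' j x_range x'_range lt_jm; apply/negP => xx'_dvd.
have lt_xn : (x < n)%N by case/andP: x_range => _ /leq_trans->.
have lt_x'n : (x' < n)%N by case/andP: x'_range => _ /leq_trans->.
have [b bE tr_neq0] : exists2 b : L, b ^+ (q ^ m) = b &
    \sum_(k < m) (if (n %| x * q ^ k + x')%N then n%:R else 0) * b ^+ (q ^ k) != 0.
  apply: (@linearized_sum_neq0 (fun k => if (n %| x * q ^ k + x')%N then n%:R else 0)
    (Ordinal lt_jm)).
  by rewrite /= xx'_dvd (prim_root_natf_neq0 prim).
have tw_dual : euclidean_dual BCH (trace_word b x).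
  move=> c /BCH_codeP c_Z; have := edot_trace_word c x bE.
  rewrite (c_Z (Ordinal lt_xn)) ?in_BCH_defining_set_small // mulr0 /qtrace big1.
    by move/eqP; rewrite fmorph_eq0 => /eqP.
  by move=> k _; apply: expr0_card_pow.
have tr_eq0 : \sum_(k < m)
    (if (n %| x * q ^ k + x')%N then n%:R else 0) * b ^+ (q ^ k) = 0.
  have /BCH_codeP/(_ (Ordinal lt_x'n) (in_BCH_defining_set_small x'_range)) :=
    dual_in _ tw_dual.
  rewrite /= eval_trace_word // => tw0; rewrite -[RHS]tw0.
  by apply: eq_bigr => k _; rewrite mulrC.
by rewrite tr_eq0 eqxx in tr_neq0.
Qed.

Lemma dual_in_BCH_iff :
  (forall y, euclidean_dual BCH y -> BCH y) <-> neg_coset_free q m delta.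
Proof.
split; [exact: neg_coset_free_of_dual_in_BCH | exact: dual_in_BCH_of_neg_coset_free].
Qed.

End BCH.


End PrimitiveRoot.

End FiniteFieldExtension.

Theorem mainTheorem1 (F : finFieldType) (L : fieldExtType F)
  (q m delta : nat) (alpha : L) :
  #|F| = q ->
  (2 <= m)%N ->
  \dim {: L} = m ->
  (q ^ m - 1)%N.-primitive_root alpha ->
  (2 <= delta <= q ^ m - 1)%N ->
  ((forall y : 'rV[F]_(q ^ m - 1),
      euclidean_dual (BCH_code q m delta alpha) y -> BCH_code q m delta alpha y)
   <-> (delta <= delta_max q m)%N).
Proof.
move=> <- m_gt1 _ prim /andP[_ le_delta_n].
apply: iff_trans (dual_in_BCH_iff prim le_delta_n) _.
exact: neg_coset_free_iff (card_finNzRing_gt1 F) m_gt1.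
Qed.
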